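(* Let $(U_t)_{t\ge0}$ be a free unitary Lévy process in a noncommutative probability space $(\mathcal A,\phi)$. For $t\ge0$ let $j_t=j_{U_t}:U_n^{nc}\to E_{11}(\mathcal A\sqcup M_n(\mathbb C))E_{11}$, i.e. $j_t(u_{ij})=E_{1i}U_tE_{j1}$. Then $(j_t)_{t\ge0}$ is a free Lévy process on $U\langle n\rangle$ over the noncommutative probability space $\big(E_{11}(\mathcal A\sqcup M_n(\mathbb C))E_{11},\,n(\phi*\mathrm{tr}_n)\big)$.
   Context: A free unitary Lévy process is a family $(U_t)_{t\ge0}$ of unitaries in $(\mathcal A,\phi)$ with $U_0=1$, the distribution of $U_s^{-1}U_t$ depending only on $t-s$ ($0\le s\le t$), $U_{t_1},U_{t_1}^{-1}U_{t_2},\dots,U_{t_{k-1}}^{-1}U_{t_k}$ $*$-free for $0\le t_1\le\dots\le t_k$, and the distribution of $U_t$ converging weakly to $\delta_1$ as $t\to0$. $U_n^{nc}$ is the universal unital $*$-algebra generated by $u_{ij}$ with $\sum_ku_{ki}^*u_{kj}=\delta_{ij}=\sum_ku_{ik}u_{jk}^*$; $\Delta(u_{ij})=\sum_ku^{(1)}_{ik}u^{(2)}_{kj}$, $\delta(u_{ij})=\delta_{ij}$, $\Sigma(u_{ij})=u_{ji}^*$; $j_1\star j_2=(j_1\sqcup j_2)\circ\Delta$ for unital $*$-homomorphisms $j_1,j_2$ from $U_n^{nc}$. A free Lévy process on $U\langle n\rangle$ over $(\mathcal B,\psi)$ is a family of unital $*$-homomorphisms $j_t:U_n^{nc}\to\mathcal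 B$ with $j_0=\delta(\cdot)1_{\mathcal B}$; $\psi\circ((j_s\circ\Sigma)\star j_t)=\psi\circ j_{t-s}$ for $s\le t$; for $0\le t_1\le\dots\le t_k$ the images of $j_{t_1},(j_{t_1}\circ\Sigma)\star j_{t_2},\dots,(j_{t_{k-1}}\circ\Sigma)\star j_{t_k}$ are $*$-free in $(\mathcal B,\psi)$; and $\psi(j_s(b))\to\delta(b)$ as $s\to0$ for all $b$. $E_{ij}$ are matrix units, $\mathrm{tr}_n$ normalized trace, $\phi*\mathrm{tr}_n$ the free product state on the free product $\mathcal A\sqcup M_n(\mathbb C)$, and $E_{11}(\mathcal A\sqcup M_n(\mathbb C))E_{11}$ has unit $E_{11}$. *)

From Stdlib Require Import Rdefinitions.
From HB Require Import structures.
From mathcomp Require Import all_boot all_order all_algebra.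
Set Implicit Arguments. Unset Strict Implicit. Unset Printing Implicit Defensive.
Import Order.TTheory GRing.Theory Num.Theory.
Local Open Scope ring_scope.

Section Defs.
Variable C : numClosedFieldType.

Definition is_star (A : lalgType C) (st : A -> A) : Prop :=
  [/\ forall x, st (st x) = x,
      forall x y, st (x * y) = st y * st x &
      forall (a : C) x y, st (a *: x + y) = (Num.conj a) *: st x + st y].

Definition is_state (A : lalgType C) (phi : A -> C) : Prop :=
  (forall (a : C) x y, phi (a *: x + y) = a * phi x + phi y) /\ phi 1 = 1.

(* The unital *-subalgebra generated by S inside the *-algebra with unit
   [one] (one = 1 for the whole algebra, one = a projection for a corner). *)
Inductive salg (A : lalgType C) (one : A) (st : A -> A) (S : A -> Prop) : A -> Prop :=
  | salg_gen x : S x -> salg one st S x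
  | salg_one : salg one st S one
  | salg_add x y : salg one st S x -> salg one st S y -> salg one st S (x + y)
  | salg_scale (a : C) x : salg one st S x -> salg one st S (a *: x)
  | salg_mul x y : salg one st S x -> salg one st S y -> salg one st S (x * y)
  | salg_star x : salg one st S x -> salg one st S (st x).

Definition free_family (A : lalgType C) (phi : A -> C) (Fs : seq (A -> Prop)) : Prop :=
  forall s : seq (nat * A),
    s != [::] ->
    (forall p, p \in s ->
       [/\ (p.1 < size Fs)%N, nth (fun _ => False) Fs p.1 p.2 & phi p.2 = 0]) ->
    path (fun p q : nat * A => p.1 != q.1) (head (0%N, 0) s) (behead s) ->
    phi (\prod_(p <- s) p.2) = 0.

Definition star_word (A : lalgType C) (st : A -> A) (x : A) (w : seq bool) : A :=
  \prod_(b <- w) (if b then st x else x).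

Definition same_dist (A : lalgType C) (st : A -> A) (phi : A -> C) (x y : A) : Prop :=
  forall w : seq bool, phi (star_word st x w) = phi (star_word st y w).

Definition unitary (A : lalgType C) (st : A -> A) (u : A) : Prop :=
  st u * u = 1 /\ u * st u = 1.

Definition ordered_times (ts : seq R) : Prop :=
  (forall i, (i < size ts)%N -> Rle R0 (nth R0 ts i)) /\
  (forall i, (i.+1 < size ts)%N -> Rle (nth R0 ts i) (nth R0 ts i.+1)).

Definition increments (X : Type) (f : R -> X) (g : R -> R -> X) (ts : seq R) : seq X :=
  match ts with
  | [::] => [::]
  | t1 :: rest => f t1 :: pairmap g t1 rest
  end.

Definition free_unitary_levy (A : lalgType C) (st : A -> A) (phi : A -> C)
    (U : R -> A) : Prop :=
  [/\ forall t, Rle R0 t -> unitary st (U t),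
      U R0 = 1,
      (forall s t s' t', Rle R0 s -> Rle s t -> Rle R0 s' -> Rle s' t' ->
          Rminus t s = Rminus t' s' ->
          same_dist st phi (st (U s) * U t) (st (U s') * U t')),
      (forall ts, ordered_times ts ->
          free_family phi
            [seq salg 1 st (fun y => y = x) | x <- increments U (fun s t => st (U s) * U t) ts]) &
      (forall (w : seq bool) (eps : C), 0 < eps ->
          exists d : R, Rlt R0 d /\
            forall t, Rlt R0 t -> Rlt t d -> `|phi (star_word st (U t) w) - 1| < eps)].

(* Elements of U_n^nc are represented by formal *-polynomial terms in the
   generators u_ij; a unital *-homomorphism j : U_n^nc -> B is determined by
   the matrix W i k = j(u_ik) of generator images (which must satisfy the
   defining relations), and j acts on a term by evaluation. *)
Inductive ncterm (n : nat) : Type :=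
  | NGen of 'I_n & 'I_n
  | NOne
  | NAdd of ncterm n & ncterm n
  | NScale of C & ncterm n
  | NMul of ncterm n & ncterm n
  | NStar of ncterm n.

Fixpoint nceval (B : lalgType C) (one : B) (st : B -> B) (n : nat)
    (W : 'I_n -> 'I_n -> B) (b : ncterm n) : B :=
  match b with
  | NGen i k => W i k
  | NOne => one
  | NAdd x y => nceval one st W x + nceval one st W y
  | NScale a x => a *: nceval one st W x
  | NMul x y => nceval one st W x * nceval one st W y
  | NStar x => st (nceval one st W x)
  end.

Fixpoint nccounit (n : nat) (b : ncterm n) : C :=
  match b with
  | NGen i k => (i == k)%:R
  | NOne => 1
  | NAdd x y => nccounit x + nccounit y
  | NScale a x => a * nccounit x
  | NMul x y => nccounit x * nccounit y
  | NStar x => Num.conj (nccounit x)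
  end.

Definition unc_hom (B : lalgType C) (st : B -> B) (one : B) (n : nat)
    (W : 'I_n -> 'I_n -> B) : Prop :=
  [/\ forall i k, one * W i k * one = W i k,
      forall i k, \sum_l st (W l i) * W l k = (i == k)%:R *: one &
      forall i k, \sum_l W i l * st (W k l) = (i == k)%:R *: one].

(* generator images of j o Sigma  (Sigma(u_ij) = u_ji^* ) *)
Definition antipode_gen (B : lalgType C) (st : B -> B) (n : nat)
    (W : 'I_n -> 'I_n -> B) : 'I_n -> 'I_n -> B :=
  fun i k => st (W k i).

(* generator images of j1 * j2 = (j1 |_| j2) o Delta *)
Definition conv_gen (B : lalgType C) (n : nat) (W1 W2 : 'I_n -> 'I_n -> B) :
    'I_n -> 'I_n -> B :=
  fun i k => \sum_l W1 i l * W2 l k.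

Definition hom_image (B : lalgType C) (one : B) (st : B -> B) (n : nat)
    (W : 'I_n -> 'I_n -> B) : B -> Prop :=
  fun x => exists b : ncterm n, x = nceval one st W b.

Definition free_levy_Un (B : lalgType C) (st : B -> B) (one : B) (psi : B -> C)
    (n : nat) (j : R -> 'I_n -> 'I_n -> B) : Prop :=
  [/\ forall t, Rle R0 t -> unc_hom st one (j t),
      (forall i k, j R0 i k = (i == k)%:R *: one),
      (forall s t, Rle R0 s -> Rle s t -> forall b : ncterm n,
          psi (nceval one st (conv_gen (antipode_gen st (j s)) (j t)) b)
          = psi (nceval one st (j (Rminus t s)) b)),
      (forall ts, ordered_times ts ->
          free_family psi
            [seq hom_image one st W
               | W <- increments j (fun s t => conv_gen (antipode_gen st (j s)) (j t)) ts]) &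
      (forall (b : ncterm n) (eps : C), 0 < eps ->
          exists d : R, Rlt R0 d /\
            forall s, Rlt R0 s -> Rlt s d ->
              `|psi (nceval one st (j s) b) - nccounit b| < eps)].

End Defs.

From Stdlib Require Import Rdefinitions Rbasic_fun Lra FunctionalExtensionality.
From HB Require Import structures.
From mathcomp Require Import all_boot all_order all_algebra ring.
Import Order.TTheory GRing.Theory Num.Theory.
Local Open Scope ring_scope.
Set Implicit Arguments. Unset Strict Implicit. Unset Printing Implicit Defensive.

(* The matrix-unit corner turns U_t into the generator images E_1i U_t E_k1 of a
   unital *-homomorphism j_t, and the increments of (j_t) are the corner images of
   the increments U_s^* U_t.  Through the matrix units, every moment of a corner
   element of X = iA x is a combination of moments of words alternating between
   M_n(C) and the *-algebra of X; since iA A and M_n(C) are free, these are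
   polynomials in the *-moments of x.  This gives stationarity and continuity.
   For freeness, a centered corner element of the m-th increment is a combination
   of reduced words: centered words alternating between M_n(C) and the algebra of
   the m-th increment, not lying in M_n(C).  In a product of such elements for
   alternating indices, adjacent M_n(C)-letters are merged and recentered, which
   leaves centered words alternating between M_n(C) and the algebras of the
   increments; these are centered because the increments are free among
   themselves and iA A is free from M_n(C). *)

Section StarAlgebra.
Variables (C : numClosedFieldType) (A : lalgType C) (st : A -> A).
Hypothesis hst : is_star st.

Lemma starK : involutive st. Proof. by case: hst. Qed.

Lemma starM x y : st (x * y) = st y * st x. Proof. by case: hst. Qed.

Lemma starD x y : st (x + y) = st x + st y.
Proof. by case: hst => _ _ h; rewrite -[x]scale1r h conjC1 !scale1r. Qed.

Lemma star0 : st 0 = 0.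
Proof. by apply: (addrI (st 0)); rewrite -starD !addr0. Qed.

Lemma starZ a x : st (a *: x) = Num.conj a *: st x.
Proof. by case: hst => _ _ h; rewrite -[a *: x]addr0 h star0 addr0. Qed.

Lemma star1 : st 1 = 1.
Proof. by have := starM (st 1) 1; rewrite mulr1 !starK mulr1 => {2}->. Qed.

Lemma star_sum (I : Type) (r : seq I) (P : pred I) (F : I -> A) :
  st (\sum_(i <- r | P i) F i) = \sum_(i <- r | P i) st (F i).
Proof. exact: (big_morph st starD star0). Qed.

Lemma star_prod (r : seq A) : st (\prod_(x <- r) x) = \prod_(x <- rev r) st x.
Proof.
elim: r => [|x r IH]; first by rewrite !big_nil star1.
by rewrite big_cons starM IH rev_cons -cats1 big_cat big_seq1.
Qed.

(* In an lalgType scalars only commute with the left factor; the involution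
   transports this to the right factor. *)
Lemma star_scalerAr (x : A) (a : C) (y : A) : x * (a *: y) = a *: (x * y).
Proof. by apply: (can_inj starK); rewrite starM !starZ starM scalerAl. Qed.

Lemma star_word_cat x w w' :
  star_word st x (w ++ w') = star_word st x w * star_word st x w'.
Proof. by rewrite /star_word big_cat. Qed.

Lemma star_star_word x w : st (star_word st x w) = star_word st x (rev (map negb w)).
Proof.
rewrite /star_word -(big_map (fun b => if b then st x else x) xpredT id) star_prod.
rewrite -!map_rev !big_map; apply: eq_bigr => -[] _ //=.
by rewrite starK.
Qed.

Lemma star_word1 w : star_word st 1 w = 1.
Proof. by rewrite /star_word big1 // => -[] _; rewrite ?star1. Qed.

Lemma salg_sum (one : A) (S : A -> Prop) (I : Type) (r : seq I) (F : I -> A) :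
  (forall i, salg one st S (F i)) -> salg one st S (\sum_(i <- r) F i).
Proof.
move=> h; apply: (big_ind (salg one st S)) => //; last exact: salg_add.
by rewrite -(scale0r one); apply/salg_scale/salg_one.
Qed.

Lemma salg_star_word x w : salg 1 st (fun z => z = x) (star_word st x w).
Proof.
elim: w => [|b w IH]; first by rewrite /star_word big_nil; exact: salg_one.
rewrite /star_word big_cons; apply: salg_mul => //.
by case: b; [apply: salg_star|]; exact: salg_gen.
Qed.

End StarAlgebra.

Section State.
Variables (C : numClosedFieldType) (A : lalgType C) (phi : A -> C).
Hypothesis hphi : is_state phi.

Lemma stateD x y : phi (x + y) = phi x + phi y.
Proof. by case: hphi => h _; have := h 1 x y; rewrite scale1r mul1r. Qed.

Lemma state0 : phi 0 = 0.
Proof. by apply: (addrI (phi 0)); rewrite -stateD !addr0. Qed.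

Lemma stateZ a x : phi (a *: x) = a * phi x.
Proof. by case: hphi => h _; rewrite -[a *: x]addr0 h state0 addr0. Qed.

Lemma state1 : phi 1 = 1. Proof. by case: hphi. Qed.

Lemma stateB x y : phi (x - y) = phi x - phi y.
Proof. by rewrite stateD -scaleN1r stateZ mulN1r. Qed.

Lemma state_sum (I : Type) (r : seq I) (P : pred I) (F : I -> A) :
  phi (\sum_(i <- r | P i) F i) = \sum_(i <- r | P i) phi (F i).
Proof. exact: (big_morph phi stateD state0). Qed.

Lemma state_centered x : phi (x - phi x *: 1) = 0.
Proof. by rewrite stateB stateZ state1 mulr1 subrr. Qed.

End State.

Section LimitAtZero.
Variable C : numClosedFieldType.

Definition tends0 (f : R -> C) (l : C) :=
  forall eps : C, 0 < eps -> exists d : R, Rlt R0 d /\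
    forall s, Rlt R0 s -> Rlt s d -> `|f s - l| < eps.

Lemma tends0_cst a : tends0 (fun _ => a) a.
Proof. by move=> eps eps_gt0; exists R1; split=> [|s _ _]; [lra|rewrite subrr normr0]. Qed.

Lemma tends0D f g a b : tends0 f a -> tends0 g b -> tends0 (fun s => f s + g s) (a + b).
Proof.
move=> hf hg eps eps_gt0.
have eps2_gt0 : 0 < eps / 2 by rewrite divr_gt0 ?ltr0Sn.
have [d1 [d1_gt0 hd1]] := hf _ eps2_gt0; have [d2 [d2_gt0 hd2]] := hg _ eps2_gt0.
exists (Rmin d1 d2); split=> [|s s_gt0 /Rmin_Rgt [s_d1 s_d2]]; first exact: Rmin_pos.
have -> : f s + g s - (a + b) = (f s - a) + (g s - b) by ring.
rewrite [eps]splitr; apply: le_lt_trans (ler_normD _ _) _.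
by apply: ltrD; [exact: hd1 | exact: hd2].
Qed.

Lemma tends0M f g a b : tends0 f a -> tends0 g b -> tends0 (fun s => f s * g s) (a * b).
Proof.
move=> hf hg eps eps_gt0.
set K := 1 + `|b| + `|a|.
have K_ge1 : 1 <= K by rewrite /K -addrA lerDl addr_ge0.
have K_gt0 : 0 < K := lt_le_trans ltr01 K_ge1.
have Keps_gt0 : 0 < K + eps by rewrite addr_gt0.
set e := eps / (K + eps).
have e_gt0 : 0 < e by rewrite /e divr_gt0.
have e_le1 : e <= 1 by rewrite /e ler_pdivrMr // mul1r lerDr ltW.
have eK_le : e * K <= eps by rewrite /e mulrAC ler_pdivrMr // ler_pM2l // lerDl ltW.
have [d1 [d1_gt0 hd1]] := hf _ e_gt0; have [d2 [d2_gt0 hd2]] := hg _ e_gt0.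
exists (Rmin d1 d2); split=> [|s s_gt0 /Rmin_Rgt [s_d1 s_d2]]; first exact: Rmin_pos.
have hu := hd1 s s_gt0 s_d1; have hv := hd2 s s_gt0 s_d2.
set u := f s - a in hu; set v := g s - b in hv.
have -> : f s * g s - a * b = u * v + u * b + a * v by rewrite /u /v; ring.
apply: lt_le_trans eK_le.
have -> : e * K = (e * 1 + e * `|b|) + `|a| * e by rewrite /K; ring.
apply: le_lt_trans (ler_normD _ _) _; apply: ltr_leD.
  apply: le_lt_trans (ler_normD _ _) _; rewrite !normrM; apply: ltr_leD.
    by apply: ltr_pM => //; exact: lt_le_trans hv e_le1.
  by apply: ler_pM => //; exact: ltW.
by rewrite normrM; apply: ler_pM => //; exact: ltW.
Qed.

End LimitAtZero.

Lemma mem_rcons_last (T : eqType) (s : seq T) x : x \in rcons s x.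
Proof. by rewrite mem_rcons mem_head. Qed.

Lemma increments_map (X Y : Type) (f : R -> X) (g : R -> R -> X) (h : X -> Y)
  (f' : R -> Y) (g' : R -> R -> Y) ts :
  (forall t, f' t = h (f t)) -> (forall s t, g' s t = h (g s t)) ->
  increments f' g' ts = map h (increments f g ts).
Proof.
move=> hf hg; case: ts => [|t ts] //=; rewrite hf; congr (_ :: _).
by elim: ts t => [|u ts IH] t //=; rewrite hg IH.
Qed.

Definition alt_labels (s : seq nat) := sorted (fun a b : nat => a != b) s.

Lemma alt_labels_path (T : Type) (x : nat * T) l :
  alt_labels (x.1 :: map fst l) = path (fun p q : nat * T => p.1 != q.1) x l.
Proof. by rewrite /alt_labels /= path_map. Qed.

Lemma alt_labels_cons a s : alt_labels (a :: s) -> alt_labels s.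
Proof. exact: path_sorted. Qed.

Lemma alt_labels_cat s1 s2 : alt_labels s1 -> alt_labels s2 ->
  (s1 = [::] \/ s2 = [::] \/ last 0%N s1 != head 0%N s2) -> alt_labels (s1 ++ s2).
Proof.
case: s1 => [|a s1] // h1; case: s2 => [|b s2] h2; first by rewrite cats0.
case=> [//|[//|/= h]]; move: h1 h2; rewrite /alt_labels /= cat_path => -> /= ->.
by rewrite h.
Qed.

Lemma alt_labels_rconsl s a : alt_labels (rcons s a) -> alt_labels s.
Proof. by rewrite /alt_labels -cats1 => /cat_sorted2 []. Qed.

Lemma alt_labels_rcons s a : alt_labels s -> (s = [::] \/ last 0%N s != a) ->
  alt_labels (rcons s a).
Proof. by move=> hs h; rewrite -cats1; apply: alt_labels_cat => //; case: h; auto. Qed.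

Lemma alt_labels_rcons_last s a : alt_labels (rcons s a) -> s = [::] \/ last 0%N s != a.
Proof.
case: s => [|b s] h; [by left | right].
by move: h; rewrite /alt_labels /= rcons_path => /andP [].
Qed.

(* [mapP] for a source type without decidable equality *)
Lemma mem_map_exists (T1 : Type) (T2 : eqType) (f : T1 -> T2) s y :
  y \in map f s -> exists x, y = f x.
Proof. by elim: s => [|a s IH] //=; rewrite inE => /orP [/eqP ->|/IH //]; exists a. Qed.

Fixpoint bitseqs (k : nat) : seq bitseq :=
  if k is k'.+1 then [seq true :: s | s <- bitseqs k'] ++ [seq false :: s | s <- bitseqs k']
  else [:: [::]].

Lemma bitseqs_head k : bitseqs k = nseq k true :: behead (bitseqs k).
Proof. by elim: k => [|k IH] //=; rewrite IH. Qed.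

Lemma size_bitseqs k s : s \in bitseqs k -> size s = k.
Proof.
elim: k s => [|k IH] s /=; first by rewrite inE => /eqP ->.
by rewrite mem_cat => /orP [] /mapP [s' h ->] /=; rewrite IH.
Qed.

Lemma count_behead_bitseqs k s : s \in behead (bitseqs k) -> (count id s < k)%N.
Proof.
elim: k s => [|k IH] s //=.
rewrite {1}bitseqs_head /= mem_cat => /orP [] /mapP [s' h ->] /=.
- by rewrite add1n ltnS IH.
- by rewrite add0n ltnS -(size_bitseqs h) count_size.
Qed.

Section CenteredProduct.
Variables (C : numClosedFieldType) (A : lalgType C) (st : A -> A).
Hypothesis hst : is_star st.

Lemma prod_centered_expand (T : Type) (a : T -> A) (c : T -> C) (L : seq T) :
  \prod_(t <- L) (a t - c t *: 1) =
  \sum_(s <- bitseqs (size L))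
     (\prod_(q <- zip s L | ~~ q.1) (- c q.2)) *: \prod_(t <- mask s L) a t.
Proof.
elim: L => [|t L IH]; first by rewrite /= big_seq1 !big_nil scale1r.
rewrite big_cons IH mulr_sumr /= big_cat !big_map.
rewrite (eq_bigr (fun s =>
     (\prod_(q <- (true, t) :: zip s L | ~~ q.1) - c q.2
        *: \prod_(u <- mask (true :: s) (t :: L)) a u)
   + (\prod_(q <- (false, t) :: zip s L | ~~ q.1) - c q.2
        *: \prod_(u <- mask (false :: s) (t :: L)) a u))).
  by rewrite big_split.
move=> s _; rewrite !big_cons /= mulrBl (star_scalerAr hst).
by rewrite -scalerAl mul1r scalerA mulNr scaleNr -scaleNr.
Qed.

Lemma prod_zip_nseq_true (T : Type) (F : bool * T -> C) (L : seq T) :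
  \prod_(q <- zip (nseq (size L) true) L | ~~ q.1) F q = 1.
Proof. by elim: L => [|t L IH]; rewrite ?big_nil //= big_cons IH. Qed.

End CenteredProduct.

Section MomentPolynomials.
Variables (C : numClosedFieldType) (A : lalgType C) (st : A -> A) (phi : A -> C).

Inductive moment_poly (I : Type) (x : I -> A) : (I -> C) -> Prop :=
  | mpoly_cst a : moment_poly x (fun _ => a)
  | mpoly_moment w : moment_poly x (fun i => phi (star_word st (x i) w))
  | mpolyD f g : moment_poly x f -> moment_poly x g -> moment_poly x (fun i => f i + g i)
  | mpolyM f g : moment_poly x f -> moment_poly x g -> moment_poly x (fun i => f i * g i)
  | mpoly_eq f g : moment_poly x f -> f =1 g -> moment_poly x g.

Variables (I : Type) (x : I -> A).

Lemma mpolyN f : moment_poly x f -> moment_poly x (fun i => - f i).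
Proof. by move=> hf; apply: mpoly_eq (mpolyM (mpoly_cst x (-1)) hf) _ => i; rewrite mulN1r. Qed.

Lemma mpoly_sum (T : Type) (r : seq T) (P : pred T) (F : T -> I -> C) :
  (forall t, P t -> moment_poly x (F t)) ->
  moment_poly x (fun i => \sum_(t <- r | P t) F t i).
Proof.
move=> hF; elim: r => [|t r IH].
  by apply: mpoly_eq (mpoly_cst x 0) _ => i; rewrite big_nil.
case hP : (P t).
  by apply: mpoly_eq (mpolyD (hF t hP) IH) _ => i; rewrite big_cons hP.
by apply: mpoly_eq IH _ => i; rewrite big_cons hP.
Qed.

Lemma mpoly_sum_seq (T : eqType) (r : seq T) (F : T -> I -> C) :
  (forall t, t \in r -> moment_poly x (F t)) ->
  moment_poly x (fun i => \sum_(t <- r) F t i).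
Proof. by move=> hF; apply: (mpoly_eq (mpoly_sum r hF)) => i; rewrite big_seq. Qed.

Lemma mpoly_prod (T : Type) (r : seq T) (P : pred T) (F : T -> I -> C) :
  (forall t, P t -> moment_poly x (F t)) ->
  moment_poly x (fun i => \prod_(t <- r | P t) F t i).
Proof.
move=> hF; elim: r => [|t r IH].
  by apply: mpoly_eq (mpoly_cst x 1) _ => i; rewrite big_nil.
case hP : (P t).
  by apply: mpoly_eq (mpolyM (hF t hP) IH) _ => i; rewrite big_cons hP.
by apply: mpoly_eq IH _ => i; rewrite big_cons hP.
Qed.

Lemma moment_poly_same_dist f :
  (forall w i j, phi (star_word st (x i) w) = phi (star_word st (x j) w)) ->
  moment_poly x f -> forall i j, f i = f j.
Proof.
move=> hx; elim=> {f} [a|w|f g _ hf _ hg|f g _ hf _ hg|f g _ hf hfg] i j //=.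
- by rewrite (hf i j) (hg i j).
- by rewrite (hf i j) (hg i j).
- by rewrite -!hfg; apply: hf.
Qed.

Lemma moment_poly_tends0 (y : R -> A) f :
  (forall w, tends0 (fun s => phi (star_word st (y s) w)) (phi (star_word st (y R0) w))) ->
  moment_poly y f -> tends0 f (f R0).
Proof.
move=> hy; elim=> {f} [a|w|f g _ hf _ hg|f g _ hf _ hg|f g _ hf hfg].
- exact: tends0_cst.
- exact: hy.
- exact: tends0D.
- exact: tends0M.
- move=> eps /hf [d [d_gt0 hd]]; exists d; split=> // s s_gt0 s_lt.
  by rewrite -!hfg; exact: hd.
Qed.

End MomentPolynomials.

Section CornerAlgebra.
Variables (C : numClosedFieldType) (B : lalgType C) (starB : B -> B).
Hypothesis hstarB : is_star starB.
Variables (n : nat) (hn : (0 < n)%N) (E : 'I_n -> 'I_n -> B).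
Hypothesis hEM : forall i j k l, E i j * E k l = (j == k)%:R *: E i l.
Hypothesis hE1 : \sum_i E i i = 1.
Hypothesis hES : forall i j, starB (E i j) = E j i.

Let e1 := Ordinal hn.
Let mulrZ := star_scalerAr hstarB.

Lemma natn_neq0 : n%:R != 0 :> C.
Proof. by rewrite pnatr_eq0 -lt0n. Qed.

Lemma mulEE i j l : E i j * E j l = E i l.
Proof. by rewrite hEM eqxx scale1r. Qed.

Lemma mulrEE (a : B) i j l : a * E i j * E j l = a * E i l.
Proof. by rewrite -mulrA mulEE. Qed.

Lemma sum_mulEE (a b : B) : \sum_l a * E l e1 * (E e1 l * b) = a * b.
Proof.
under eq_bigr => l _ do rewrite mulrA mulrEE.
by rewrite -mulr_suml -mulr_sumr hE1 mulr1.
Qed.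

Definition jgen (X : B) : 'I_n -> 'I_n -> B := fun i k => E e1 i * X * E k e1.

Lemma star_jgen X i k : starB (jgen X i k) = jgen (starB X) k i.
Proof. by rewrite /jgen !(starM hstarB) !hES mulrA. Qed.

Lemma conv_jgen X Y : conv_gen (jgen X) (jgen Y) =2 jgen (X * Y).
Proof.
move=> i k; have := sum_mulEE (E e1 i * X) (Y * E k e1).
rewrite /conv_gen /jgen !mulrA => <-.
by apply: eq_bigr => l _; rewrite !mulrA.
Qed.

Lemma conv_antipode_jgen X Y :
  conv_gen (antipode_gen starB (jgen X)) (jgen Y) =2 jgen (starB X * Y).
Proof.
move=> i k; rewrite -conv_jgen /conv_gen /antipode_gen.
by apply: eq_bigr => l _; rewrite star_jgen.
Qed.

Lemma jgen1 i k : jgen 1 i k = (i == k)%:R *: E e1 e1.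
Proof. by rewrite /jgen mulr1 hEM. Qed.

Lemma jgen_corner X i k : E e1 e1 * jgen X i k * E e1 e1 = jgen X i k.
Proof. by rewrite /jgen !mulrA mulEE mulrEE. Qed.

Lemma unc_hom_jgen X : starB X * X = 1 -> X * starB X = 1 -> unc_hom starB (E e1 e1) (jgen X).
Proof.
move=> hXX' hX'X; split=> [|i k|i k]; first exact: jgen_corner.
  under eq_bigr => l _ do rewrite star_jgen.
  by have := conv_jgen (starB X) X i k; rewrite /conv_gen => ->; rewrite hXX' jgen1.
under eq_bigr => l _ do rewrite star_jgen.
by have := conv_jgen X (starB X) i k; rewrite /conv_gen => ->; rewrite hX'X jgen1.
Qed.

Lemma nceval_jgen1 b : nceval (E e1 e1) starB (jgen 1) b = nccounit b *: E e1 e1.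
Proof.
elim: b => [i k| |x IHx y IHy|a x IHx|x IHx y IHy|x IHx] /=.
- exact: jgen1.
- by rewrite scale1r.
- by rewrite IHx IHy scalerDl.
- by rewrite IHx scalerA.
- by rewrite IHx IHy -scalerAl mulrZ mulEE scalerA.
- by rewrite IHx (starZ hstarB) hES.
Qed.

Lemma nceval_jgen_corner X b :
  E e1 e1 * nceval (E e1 e1) starB (jgen X) b * E e1 e1 = nceval (E e1 e1) starB (jgen X) b.
Proof.
elim: b => [i k| |x IHx y IHy|a x IHx|x IHx y IHy|x IHx] /=.
- exact: jgen_corner.
- by rewrite !mulEE.
- by rewrite mulrDr mulrDl IHx IHy.
- by rewrite mulrZ -scalerAl IHx.
- by rewrite -IHx -IHy !mulrA !mulrEE mulEE.
- by rewrite -IHx !(starM hstarB) hES !mulrA !mulrEE mulEE.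
Qed.

(* by [hE1], the same as [d] lying in the span of the matrix units, i.e. in M_n(C) *)
Definition in_Mn (d : B) := forall i j, exists c : C, E i i * d * E j j = c *: E i j.

Lemma in_Mn_E k l : in_Mn (E k l).
Proof.
move=> i j; exists ((i == k)%:R * (l == j)%:R).
by rewrite hEM -scalerAl hEM scalerA.
Qed.

Lemma in_Mn1 : in_Mn 1.
Proof. by move=> i j; exists (i == j)%:R; rewrite mulr1 hEM. Qed.

Lemma in_MnD d d' : in_Mn d -> in_Mn d' -> in_Mn (d + d').
Proof.
move=> hd hd' i j; have [c hc] := hd i j; have [c' hc'] := hd' i j.
by exists (c + c'); rewrite mulrDr mulrDl hc hc' scalerDl.
Qed.

Lemma in_MnZ a d : in_Mn d -> in_Mn (a *: d).
Proof.
move=> hd i j; have [c hc] := hd i j; exists (a * c).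
by rewrite mulrZ -scalerAl hc scalerA.
Qed.

Lemma in_Mn0 : in_Mn 0.
Proof. by rewrite -(scale0r 1); exact/in_MnZ/in_Mn1. Qed.

Lemma in_Mn_centered d c : in_Mn d -> in_Mn (d - c *: 1).
Proof. by move=> hd; rewrite -scaleNr; exact/(in_MnD hd)/in_MnZ/in_Mn1. Qed.

Lemma in_MnM d d' : in_Mn d -> in_Mn d' -> in_Mn (d * d').
Proof.
move=> hd hd' i j.
have -> : E i i * (d * d') * E j j = \sum_k (E i i * d * E k k) * (E k k * d' * E j j).
  have -> : d * d' = \sum_k d * E k k * d' by rewrite -mulr_suml -mulr_sumr hE1 mulr1.
  rewrite mulr_sumr mulr_suml; apply: eq_bigr => k _.
  by rewrite !mulrA mulrEE.
apply: (big_ind (fun x => exists c, x = c *: E i j)).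
- by exists 0; rewrite scale0r.
- by move=> x y [c ->] [c' ->]; exists (c + c'); rewrite scalerDl.
- move=> k _; have [c ->] := hd i k; have [c' ->] := hd' k j.
  by exists (c * c'); rewrite -scalerAl mulrZ mulEE scalerA.
Qed.

Lemma in_Mn_star d : in_Mn d -> in_Mn (starB d).
Proof.
move=> hd i j; have [c hc] := hd j i; exists (Num.conj c).
have -> : E i i * starB d * E j j = starB (E j j * d * E i i).
  by rewrite !(starM hstarB) !hES mulrA.
by rewrite hc (starZ hstarB) hES.
Qed.

Lemma salg_in_Mn d : in_Mn d -> salg 1 starB (fun x => exists i j, x = E i j) d.
Proof.
move=> hd; have -> : d = \sum_i \sum_j E i i * d * E j j.
  under [RHS]eq_bigr => i _ do rewrite -mulr_sumr hE1 mulr1.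
  by rewrite -mulr_suml hE1 mul1r.
apply: salg_sum => i; apply: salg_sum => j.
by have [c ->] := hd i j; apply/salg_scale/salg_gen; exists i, j.
Qed.

(* Words in the letters "element of M_n(C)" and "*-word in X". *)
Definition mn_elt := {d : B | in_Mn d}.
Definition letter := (mn_elt + seq bool)%type.

Definition eval_letter (X : B) (it : letter) : B :=
  match it with inl d => sval d | inr w => star_word starB X w end.
Definition eval_word X (L : seq letter) := \prod_(it <- L) eval_letter X it.

Definition is_mat (it : letter) := if it is inl _ then true else false.
Definition alternating (L : seq letter) := sorted (fun a b => is_mat a != is_mat b) L.

Definition mul_mn (d d' : mn_elt) : mn_elt :=
  exist _ (sval d * sval d') (in_MnM (svalP d) (svalP d')).
Definition E_mn i j : mn_elt := exist _ (E i j) (in_Mn_E i j).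
Definition star_mn (d : mn_elt) : mn_elt := exist _ (starB (sval d)) (in_Mn_star (svalP d)).

Definition star_letter (it : letter) : letter :=
  match it with inl d => inl (star_mn d) | inr w => inr (rev (map negb w)) end.
Definition star_letters (L : seq letter) := rev (map star_letter L).

Definition merge_letter (it : letter) (l : seq letter) : seq letter :=
  match l with
  | [::] => [:: it]
  | it' :: l' =>
     match it, it' with
     | inl d, inl d' => inl (mul_mn d d') :: l'
     | inr w, inr w' => inr (w ++ w') :: l'
     | _, _ => it :: it' :: l'
     end
  end.

Fixpoint merge_word (L : seq letter) : seq letter :=
  if L is it :: l then merge_letter it (merge_word l) else [::].

Lemma eval_word_cons X it l : eval_word X (it :: l) = eval_letter X it * eval_word X l.
Proof. by rewrite /eval_word big_cons. Qed.

Lemma eval_word_cat X l l' : eval_word X (l ++ l') = eval_word X l * eval_word X l'.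
Proof. by rewrite /eval_word big_cat. Qed.

Lemma eval_merge_letter X it l : eval_word X (merge_letter it l) = eval_letter X it * eval_word X l.
Proof.
case: l => [|it' l] /=; first by rewrite /eval_word !big_cons big_nil.
case: it => [d|w]; case: it' => [d'|w'] //=; rewrite !eval_word_cons /= ?mulrA //.
by rewrite star_word_cat.
Qed.

Lemma eval_merge_word X L : eval_word X (merge_word L) = eval_word X L.
Proof. by elim: L => [|it l IH] //=; rewrite eval_merge_letter IH eval_word_cons. Qed.

Lemma size_merge_word L : (size (merge_word L) <= size L)%N.
Proof.
elim: L => [|it l IH] //=.
suff: (size (merge_letter it (merge_word l)) <= (size (merge_word l)).+1)%N by move/leq_trans; apply.
by case: (merge_word l) => [|it' l'] //=; case: it => ?; case: it' => ?.
Qed.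

Lemma alternating_merge_word L : alternating (merge_word L).
Proof.
elim: L => [|it l] //=; case: (merge_word l) => [|it' l'] //=.
by case: it => ?; case: it' => ?; case: l' => [|[] ? ?].
Qed.

Lemma star_eval_word X L : starB (eval_word X L) = eval_word X (star_letters L).
Proof.
rewrite /eval_word -(big_map (eval_letter X) xpredT id) (star_prod hstarB).
rewrite /star_letters -!map_rev !big_map; apply: eq_bigr => -[d|w] _ //=.
by rewrite (star_star_word hstarB).
Qed.

Fixpoint term_words (b : ncterm C n) : seq (C * seq letter) :=
  match b with
  | NGen i k => [:: (1, [:: inl (E_mn e1 i); inr [:: false]; inl (E_mn k e1)])]
  | NOne => [:: (1, [:: inl (E_mn e1 e1)])]
  | NAdd x y => term_words x ++ term_words y
  | NScale a x => [seq (a * p.1, p.2) | p <- term_words x]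
  | NMul x y => [seq (p.1 * q.1, p.2 ++ q.2) | p <- term_words x, q <- term_words y]
  | NStar x => [seq (Num.conj p.1, star_letters p.2) | p <- term_words x]
  end.

Lemma nceval_jgen_words X b :
  nceval (E e1 e1) starB (jgen X) b = \sum_(p <- term_words b) p.1 *: eval_word X p.2.
Proof.
elim: b => [i k| |x IHx y IHy|a x IHx|x IHx y IHy|x IHx] /=.
- by rewrite big_seq1 scale1r /eval_word !big_cons big_nil /= /star_word big_seq1 /jgen !mulr1 mulrA.
- by rewrite big_seq1 scale1r /eval_word big_seq1.
- by rewrite IHx IHy big_cat.
- by rewrite IHx big_map scaler_sumr; apply: eq_bigr => p _; rewrite scalerA.
- rewrite IHx IHy big_allpairs_dep mulr_suml; apply: eq_bigr => p _.
  rewrite mulr_sumr; apply: eq_bigr => q _.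
  by rewrite -scalerAl mulrZ scalerA eval_word_cat.
- rewrite IHx big_map (star_sum hstarB); apply: eq_bigr => p _.
  by rewrite (starZ hstarB) star_eval_word.
Qed.

Section FreeProduct.
Variables (A : lalgType C) (starA : A -> A) (phi : A -> C).
Hypotheses (hstarA : is_star starA) (hphi : is_state phi).
Variables (psi : B -> C) (iA : A -> B).
Hypothesis hpsi : is_state psi.
Hypothesis hiA1 : iA 1 = 1.
Hypothesis hiAM : forall x y, iA (x * y) = iA x * iA y.
Hypothesis hiAL : forall (a : C) x y, iA (a *: x + y) = a *: iA x + iA y.
Hypothesis hiAS : forall x, iA (starA x) = starB (iA x).
Hypothesis hiAphi : forall x, psi (iA x) = phi x.
Hypothesis hEtr : forall i j, psi (E i j) = (i == j)%:R / n%:R.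
Hypothesis hfree : free_family psi
     [:: salg 1 starB (fun x => exists a, x = iA a);
         salg 1 starB (fun x => exists i j, x = E i j)].

Lemma iA_centered x c : iA (x - c *: 1) = iA x - c *: 1.
Proof. by rewrite addrC -scaleNr hiAL hiA1 scaleNr addrC. Qed.

Lemma iA_star_word x w : star_word starB (iA x) w = iA (star_word starA x w).
Proof.
elim: w => [|b w IH]; first by rewrite /star_word !big_nil hiA1.
by rewrite /star_word !big_cons -!/(star_word _ _ _) IH hiAM; case: b; rewrite ?hiAS.
Qed.

Lemma psi_jgen1 b : n%:R * psi (nceval (E e1 e1) starB (jgen 1) b) = nccounit b.
Proof.
by rewrite nceval_jgen1 (stateZ hpsi) hEtr eqxx mul1r mulrCA divff ?mulr1 // natn_neq0.
Qed.

Definition letter_label (it : letter) : nat := if is_mat it then 1%N else 0%N.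

Lemma psi_centered_alternating x (L : seq letter) : L <> [::] -> alternating L ->
  psi (\prod_(it <- L) (eval_letter (iA x) it - psi (eval_letter (iA x) it) *: 1)) = 0.
Proof.
move=> hL hA; set c := fun it => eval_letter (iA x) it - psi (eval_letter (iA x) it) *: 1.
have -> : \prod_(it <- L) c it = \prod_(p <- [seq (letter_label it, c it) | it <- L]) p.2.
  by rewrite big_map.
apply: hfree; first by case: L hL hA.
  move=> _ /mem_map_exists [[d|w] ->] /=; split=> //; rewrite ?(state_centered hpsi) //.
    exact/salg_in_Mn/in_Mn_centered/svalP.
  by apply: salg_gen; exists (star_word starA x w - psi (iA (star_word starA x w)) *: 1);
    rewrite iA_centered -iA_star_word.
case: L hL hA => [|it l] //= _; rewrite path_map; apply: sub_path => a b.
by case: a => ?; case: b => ?.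
Qed.

Lemma psi_alternating_word x (L : seq letter) : L <> [::] -> alternating L ->
  psi (eval_word (iA x) L) = - \sum_(s <- behead (bitseqs (size L)))
     (\prod_(q <- zip s L | ~~ q.1) - psi (eval_letter (iA x) q.2)) *
     psi (eval_word (iA x) (mask s L)).
Proof.
move=> hL hA; have := psi_centered_alternating x hL hA.
rewrite (prod_centered_expand hstarB) (state_sum hpsi) bitseqs_head big_cons.
rewrite (stateZ hpsi) prod_zip_nseq_true mul1r mask_true //.
move/eqP; rewrite addr_eq0 => /eqP ->; congr (- _).
by apply: eq_bigr => s _; rewrite (stateZ hpsi).
Qed.

Lemma moment_poly_word (I : Type) (x : I -> A) L :
  moment_poly starA phi x (fun i => psi (eval_word (iA (x i)) L)).
Proof.
have [N] := ubnP (size L); elim: N L => [|N IH] L // /ltnSE hL.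
apply: (mpoly_eq (f := fun i => psi (eval_word (iA (x i)) (merge_word L)))); last first.
  by move=> i; rewrite eval_merge_word.
have := alternating_merge_word L; have := leq_trans (size_merge_word L) hL.
case: (merge_word L) => [_ _|it l hL' hA].
  by apply: (mpoly_eq (mpoly_cst _ _ _ (psi 1))) => i; rewrite /eval_word big_nil.
have hne : it :: l <> [::] by [].
apply: (mpoly_eq _ (fun i => esym (psi_alternating_word (x i) hne hA))); apply: mpolyN.
apply: mpoly_sum_seq => s hs; apply: mpolyM.
  apply: mpoly_prod => -[_ [d|w]] _ /=; apply: mpolyN; first exact: mpoly_cst.
  by apply: (mpoly_eq (mpoly_moment _ _ _ w)) => i; rewrite iA_star_word hiAphi.
apply: IH; rewrite size_mask ?(size_bitseqs (mem_behead hs)) //.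
exact: leq_trans (count_behead_bitseqs hs) hL'.
Qed.

Lemma moment_poly_nceval (I : Type) (x : I -> A) b :
  moment_poly starA phi x (fun i => psi (nceval (E e1 e1) starB (jgen (iA (x i))) b)).
Proof.
apply: (mpoly_eq (f := fun i =>
  \sum_(p <- term_words b) p.1 * psi (eval_word (iA (x i)) p.2))).
  by apply: mpoly_sum => p _; apply/mpolyM/moment_poly_word; exact: mpoly_cst.
move=> i; rewrite nceval_jgen_words (state_sum hpsi).
by apply: eq_bigr => p _; rewrite (stateZ hpsi).
Qed.

Section Increments.
Variable xs : seq A.
Hypothesis hxs : free_family phi [seq salg 1 starA (fun y => y = x) | x <- xs].

(* Letters are labelled: [0] for M_n(C), [m.+1] for [iA] of the *-algebra
   generated by the [m]-th element of [xs]. *)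
Definition in_incr_alg m (y : B) := (m < size xs)%N /\
  exists a, y = iA a /\ salg 1 starA (fun z => z = nth 0 xs m) a.
Definition letter_ok (p : nat * B) := if p.1 is m.+1 then in_incr_alg m p.2 else in_Mn p.2.
Definition centered_ok (L : seq (nat * B)) := forall p, p \in L -> letter_ok p /\ psi p.2 = 0.
Definition lprod (L : seq (nat * B)) := \prod_(p <- L) p.2.

Lemma lprod_cons p l : lprod (p :: l) = p.2 * lprod l.
Proof. by rewrite /lprod big_cons. Qed.

Lemma lprod_cat l l' : lprod (l ++ l') = lprod l * lprod l'.
Proof. by rewrite /lprod big_cat. Qed.

Lemma lprod_rcons l p : lprod (rcons l p) = lprod l * p.2.
Proof. by rewrite -cats1 lprod_cat lprod_cons /lprod big_nil mulr1. Qed.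

Lemma centered_ok_cat P Q : centered_ok P -> centered_ok Q -> centered_ok (P ++ Q).
Proof. by move=> hP hQ p; rewrite mem_cat => /orP [/hP|/hQ]. Qed.

Lemma centered_ok_sub P Q : centered_ok P -> {subset Q <= P} -> centered_ok Q.
Proof. by move=> hP hQP p /hQP /hP. Qed.

Definition alt_run m (a : A) := exists run : seq (nat * A),
  [/\ run != [::], (head (0%N, 0) run).1 = m,
      (forall p, p \in run -> [/\ (p.1 < size xs)%N,
                                 salg 1 starA (fun z => z = nth 0 xs p.1) p.2 & phi p.2 = 0]),
      alt_labels (map fst run) & a = \prod_(p <- run) p.2].

Lemma alt_run_phi m a : alt_run m a -> phi a = 0.
Proof.
case=> run [hne _ hin hadj ->]; apply: hxs => //.
  by move=> p /hin [h1 h2 h3]; rewrite size_map (nth_map 0).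
by case: run hne hin hadj => [|r rs] //= _ _; rewrite -alt_labels_path.
Qed.

Lemma alt_run1 m a : (m < size xs)%N -> salg 1 starA (fun z => z = nth 0 xs m) a ->
  phi a = 0 -> alt_run m a.
Proof.
move=> h1 h2 h3; exists [:: (m, a)]; split=> //; last by rewrite big_seq1.
by move=> p; rewrite inE => /eqP ->.
Qed.

Lemma alt_run_cons m m' a0 a : alt_run m' a -> m != m' -> (m < size xs)%N ->
  salg 1 starA (fun z => z = nth 0 xs m) a0 -> phi a0 = 0 -> alt_run m (a0 * a).
Proof.
case=> run [hne hhd hin hadj ->] hmm' h1 h2 h3; exists ((m, a0) :: run); split=> //.
- by move=> p; rewrite inE => /orP [/eqP -> //|/hin].
- by case: run hne hhd hin hadj => [|r rs] //= _ hhd _ ->; rewrite andbT hhd.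
- by rewrite big_cons.
Qed.

(* Merging maximal runs of letters from the algebras of [xs] into single letters
   of [iA A] (new label [0]) relabels a word for the freeness of [iA A] and
   M_n(C) (new label [1]). *)
Fixpoint collapse (L : seq (nat * B)) : seq (nat * B) :=
  match L with
  | [::] => [::]
  | p :: l =>
     if p.1 is _.+1 then
       match collapse l with
       | (0%N, z) :: g => (0%N, p.2 * z) :: g
       | g => (0%N, p.2) :: g
       end
     else (1%N, p.2) :: collapse l
  end.

Lemma lprod_collapse L : lprod (collapse L) = lprod L.
Proof.
elim: L => [|[[|k] y] l IH] //=; first by rewrite !lprod_cons IH.
rewrite lprod_cons -IH.
by case: (collapse l) => [|[[|j] z] g] /=; rewrite !lprod_cons ?mulrA.
Qed.

Definition collapsed_ok (q : nat * B) :=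
  (q.1 = 0%N /\ exists m a, q.2 = iA a /\ alt_run m a)
  \/ (q.1 = 1%N /\ in_Mn q.2 /\ psi q.2 = 0).

Lemma collapse_head m y l : centered_ok ((m.+1, y) :: l) -> alt_labels (m.+1 :: map fst l) ->
  exists a g, collapse ((m.+1, y) :: l) = (0%N, iA a) :: g /\ alt_run m a.
Proof.
elim: l m y => [|[k y'] l IH] m y hok hadj;
  have [[hm [a0 [/= -> ha0]]] /= hy0] := hok _ (mem_head _ _);
  have hpa0 : phi a0 = 0 by rewrite -hiAphi.
  by exists a0, [::]; split=> //; exact: alt_run1.
case: k IH hok hadj => [|j] IH hok hadj.
  by exists a0, ((1%N, y') :: collapse l); split=> //; exact: alt_run1.
have [|//|a [g [hg hr]]] := IH j y'.
  by apply: centered_ok_sub hok _ => q hq; rewrite inE hq orbT.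
  exact: alt_labels_cons hadj.
exists (a0 * a), g; move: hg => /= ->; rewrite hiAM; split=> //.
apply: alt_run_cons hr _ hm ha0 hpa0.
by move: hadj; rewrite /alt_labels /= eqSS => /andP [].
Qed.

Lemma collapse_ok L : centered_ok L -> alt_labels (map fst L) ->
  (forall q, q \in collapse L -> collapsed_ok q) /\ alt_labels (map fst (collapse L)).
Proof.
elim: L => [|[k y] l IH] // hok hadj.
have hokl : centered_ok l by apply: centered_ok_sub hok _ => q hq; rewrite inE hq orbT.
have [hmem hadjl] := IH hokl (alt_labels_cons hadj).
case: k hok hadj => [|m] hok hadj.
  have [hy hpy] := hok _ (mem_head _ _).
  have -> : collapse ((0%N, y) :: l) = (1%N, y) :: collapse l by [].
  split; first by move=> q; rewrite inE => /orP [/eqP -> |/hmem //]; right.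
  case: l {IH hok} hmem hadjl hadj hokl => [|[[|j] y'] l'] // hmem hadjl hadj hokl.
  have [a [g [hg _]]] := collapse_head hokl (alt_labels_cons hadj).
  by move: hadjl; rewrite hg.
have [a [g [hg hr]]] := collapse_head hok hadj.
have hhead : collapsed_ok (0%N, iA a) by left; split=> //; exists m, a.
rewrite hg; move: hg hmem hadjl => /=.
case: (collapse l) => [|[[|k] z] g0] [_ <-] hmem hadjl; split=> // q;
  rewrite in_cons => /orP [/eqP -> //|hq]; apply: hmem => //.
all: by rewrite inE hq orbT.
Qed.

(* The freeness of [xs] and of [iA A] and M_n(C), combined. *)
Lemma psi_lprod_centered L : L <> [::] -> centered_ok L -> alt_labels (map fst L) ->
  psi (lprod L) = 0.
Proof.
move=> hne hok hadj; rewrite -lprod_collapse.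
have [hmem hadjc] := collapse_ok hok hadj.
apply: hfree.
- case: L hne {hok hadj hmem hadjc} => [|[[|k] y] l] //= _.
  by case: (collapse l) => [|[[|?] ?] ?].
- move=> p /hmem [[-> [m [a [-> hr]]]]|[-> [hp hp0]]]; split=> //.
  + by apply: salg_gen; exists a.
  + by rewrite hiAphi; exact: alt_run_phi hr.
  + exact: salg_in_Mn.
- by case: (collapse L) hadjc => [|q g] //= h; rewrite -alt_labels_path.
Qed.

Definition letter_at m (p : nat * B) := letter_ok p /\ (p.1 = 0%N \/ p.1 = m.+1).
Definition word_at m (L : seq (nat * B)) := forall p, p \in L -> letter_at m p.
Definition has_incr (L : seq (nat * B)) := has (fun k : nat => k != 0%N) (map fst L).

Definition reduced m (L : seq (nat * B)) :=
  [/\ word_at m L, (forall p, p \in L -> psi p.2 = 0), alt_labels (map fst L) & has_incr L].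

Inductive reduced_span m : B -> Prop :=
  | rspan_lprod R : reduced m R -> reduced_span m (lprod R)
  | rspan0 : reduced_span m 0
  | rspanD x y : reduced_span m x -> reduced_span m y -> reduced_span m (x + y)
  | rspanZ a x : reduced_span m x -> reduced_span m (a *: x).

Definition Mn_plus_rspan m (x : B) := exists d y, [/\ in_Mn d, reduced_span m y & x = d + y].

Lemma reduced_centered_ok m R : reduced m R -> centered_ok R.
Proof. by case=> hw hc _ _ p hp; split; [case: (hw p hp)|exact: hc]. Qed.

Lemma reduced_psi m R : reduced m R -> psi (lprod R) = 0.
Proof.
move=> hR; have [_ _ hadj hX] := hR.
apply: psi_lprod_centered hadj; last exact: reduced_centered_ok hR.
by move=> R0; rewrite R0 in hX.
Qed.

Lemma rspan_psi m x : reduced_span m x -> psi x = 0.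
Proof.
elim=> [R /reduced_psi //|||a y _ hy]; first exact: (state0 hpsi).
  by move=> y z _ hy _ hz; rewrite (stateD hpsi) hy hz addr0.
by rewrite (stateZ hpsi) hy mulr0.
Qed.

Lemma Mn_plus_rspanD m x y :
  Mn_plus_rspan m x -> Mn_plus_rspan m y -> Mn_plus_rspan m (x + y).
Proof.
case=> d [z [hd hz ->]] [d' [z' [hd' hz' ->]]].
by exists (d + d'), (z + z'); split; [exact: in_MnD | exact: rspanD | rewrite addrACA].
Qed.

Lemma Mn_plus_rspanZ m a x : Mn_plus_rspan m x -> Mn_plus_rspan m (a *: x).
Proof.
case=> d [z [hd hz ->]]; exists (a *: d), (a *: z).
by split; [exact: in_MnZ | exact: rspanZ | rewrite scalerDr].
Qed.

Lemma Mn_plus_rspan_Mn m d : in_Mn d -> Mn_plus_rspan m d.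
Proof. by move=> hd; exists d, 0; split; [|exact: rspan0|rewrite addr0]. Qed.

Lemma Mn_plus_rspan_rspan m y : reduced_span m y -> Mn_plus_rspan m y.
Proof. by move=> hy; exists 0, y; split; [exact: in_Mn0| |rewrite add0r]. Qed.

Lemma Mn_plus_rspan_sum m (I : Type) (r : seq I) (F : I -> B) :
  (forall i, Mn_plus_rspan m (F i)) -> Mn_plus_rspan m (\sum_(i <- r) F i).
Proof.
move=> hF; apply: big_ind => //; last exact: Mn_plus_rspanD.
exact/Mn_plus_rspan_Mn/in_Mn0.
Qed.

Lemma letter_at_mul m p q : letter_at m p -> letter_at m q -> p.1 = q.1 ->
  letter_at m (p.1, p.2 * q.2).
Proof.
case: p q => [[|k] y] [k' y'] [h1 h2] [h1' _] /= e; subst k'; split=> //=.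
  exact: in_MnM.
move: h1 h1'; rewrite /letter_ok /= => -[hm [a [-> ha]]] [_ [a' [-> ha']]].
split=> //.
by exists (a * a'); rewrite hiAM; split=> //; exact: salg_mul.
Qed.

Lemma letter_ok_centered p c : letter_ok p -> letter_ok (p.1, p.2 - c *: 1).
Proof.
rewrite /letter_ok; case: p => [[|k] y] /= h; first exact: in_Mn_centered.
case: h => hm [a [-> ha]]; split=> //; exists (a - c *: 1); split; first by rewrite iA_centered.
by apply: salg_add => //; rewrite -scaleNr; exact/salg_scale/salg_one.
Qed.

Fixpoint squash (L : seq (nat * B)) :=
  if L is p :: l then
    match squash l with
    | q :: l' => if p.1 == q.1 then (p.1, p.2 * q.2) :: l' else p :: q :: l'
    | [::] => [:: p]
    end
  else [::].

Lemma lprod_squash L : lprod (squash L) = lprod L.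
Proof.
elim: L => [|p l IH] //=; rewrite lprod_cons -IH.
case: (squash l) => [|q l'] /=; first by rewrite !lprod_cons.
by case: ifP => _; rewrite !lprod_cons // mulrA.
Qed.

Lemma size_squash L : (size (squash L) <= size L)%N.
Proof.
elim: L => [|p l IH] //=; case: (squash l) IH => [|q l'] //= IH.
by case: ifP => _ /=; rewrite ltnS // ltnW.
Qed.

Lemma alt_labels_squash L : alt_labels (map fst (squash L)).
Proof.
elim: L => [|p l IH] //=; case: (squash l) IH => [|q l'] //= IH.
case: ifP => [/eqP -> //|/negbT h]; by rewrite /alt_labels /= h.
Qed.

Lemma word_at_squash m L : word_at m L -> word_at m (squash L).
Proof.
elim: L => [|p l IH] //= hw.
have hl : word_at m l by move=> q hq; apply: hw; rewrite inE hq orbT.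
have hp : letter_at m p by apply: hw; rewrite inE eqxx.
have := IH hl; case: (squash l) => [|q l'] /= hw'.
  by move=> r; rewrite inE => /eqP ->.
case: ifP => /eqP h r; rewrite inE => /orP [/eqP ->|hr]; try exact: hw'.
- by apply: letter_at_mul => //; apply: hw'; rewrite inE eqxx.
- by apply: hw'; rewrite inE hr orbT.
- by [].
Qed.

Lemma lprod_recenter l1 p l2 c :
  lprod (l1 ++ p :: l2) = lprod (l1 ++ (p.1, p.2 - c *: 1) :: l2) + c *: lprod (l1 ++ l2).
Proof. by rewrite !lprod_cat !lprod_cons /= mulrBl -scalerAl mul1r mulrBr mulrZ subrK. Qed.

Lemma lprod_in_Mn L : (forall p, p \in L -> letter_ok p) -> ~~ has_incr L -> in_Mn (lprod L).
Proof.
elim: L => [|[k y] l IH] hL hX; first by rewrite /lprod big_nil; exact: in_Mn1.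
move: hX; rewrite /has_incr /= negb_or => /andP [/negbNE/eqP k0 hX].
rewrite lprod_cons; apply: in_MnM; last by apply: IH => // q hq; apply: hL; rewrite inE hq orbT.
by have := hL _ (mem_head _ _); rewrite /letter_ok /= k0.
Qed.

(* Recentering the letters of [l1] one at a time, from right to left: each step
   splits off a shorter word. *)
Lemma recenter_prefix m N :
  (forall L, (size L < N)%N -> word_at m L -> Mn_plus_rspan m (lprod L)) ->
  forall l1 l2, word_at m (l1 ++ l2) -> alt_labels (map fst (l1 ++ l2)) ->
    has_incr (l1 ++ l2) -> (size (l1 ++ l2) <= N)%N ->
    (forall p, p \in l2 -> psi p.2 = 0) -> Mn_plus_rspan m (lprod (l1 ++ l2)).
Proof.
move=> IHN; elim/last_ind => [|l1 p IH] l2 hw hadj hX hs hc.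
  by apply/Mn_plus_rspan_rspan/rspan_lprod; split.
rewrite cat_rcons in hw hadj hX hs *.
have [hp0|hp] := eqVneq (psi p.2) 0.
  by apply: IH => // q; rewrite inE => /orP [/eqP -> |/hc].
rewrite (lprod_recenter _ _ _ (psi p.2)); apply: Mn_plus_rspanD.
  have hfst : map fst (l1 ++ (p.1, p.2 - psi p.2 *: 1) :: l2) = map fst (l1 ++ p :: l2).
    by rewrite !map_cat.
  apply: IH; rewrite ?hfst //.
  - move=> q; rewrite mem_cat inE => /orP [hq|/orP [/eqP ->|hq]];
      try by apply: hw; rewrite mem_cat ?inE ?hq ?orbT.
    have [hpok hpl] : letter_at m p by apply: hw; rewrite mem_cat inE eqxx orbT.
    by split=> //; exact: letter_ok_centered.
  - by rewrite /has_incr hfst.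
  - by rewrite size_cat /= -(size_cat l1 (p :: l2)).
  - by move=> q; rewrite inE => /orP [/eqP -> /=|/hc //]; exact: (state_centered hpsi).
apply/Mn_plus_rspanZ/IHN; first by move: hs; rewrite !size_cat /= addnS.
by move=> q; rewrite mem_cat => /orP [] hq; apply: hw; rewrite mem_cat inE hq ?orbT.
Qed.

Lemma lprod_Mn_plus_rspan m L : word_at m L -> Mn_plus_rspan m (lprod L).
Proof.
have [N] := ubnP (size L); elim: N L => [|N IHN] L // /ltnSE hs hw.
rewrite -lprod_squash; have := leq_trans (size_squash L) hs.
have := word_at_squash hw; have := alt_labels_squash L.
move: (squash L) => K hadj hwK hsK.
have [hX|hX] := boolP (has_incr K); last first.
  by apply/Mn_plus_rspan_Mn/lprod_in_Mn => // p /hwK [].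
by rewrite -[K]cats0; apply: (recenter_prefix IHN); rewrite ?cats0.
Qed.

Lemma centered_Mn_letter m d : in_Mn d ->
  letter_at m (0%N, d - psi d *: 1) /\ psi (d - psi d *: 1) = 0.
Proof. by move=> hd; split; [split; [exact: in_Mn_centered | left] | exact: state_centered]. Qed.

Lemma reduced_behead m p R : reduced m (p :: R) -> p.1 = 0%N -> reduced m R.
Proof.
case=> hw hc ha hX hp; split.
- by move=> q hq; apply: hw; rewrite inE hq orbT.
- by move=> q hq; apply: hc; rewrite inE hq orbT.
- exact: alt_labels_cons ha.
- by move: hX; rewrite /has_incr /= hp.
Qed.

Lemma reduced_set_head m q p R : reduced m (p :: R) -> letter_at m q -> psi q.2 = 0 ->
  q.1 = p.1 -> reduced m (q :: R).
Proof.
case=> hw hc ha hX hq hq0 e; split.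
- by move=> r; rewrite inE => /orP [/eqP -> //|hr]; apply: hw; rewrite inE hr orbT.
- by move=> r; rewrite inE => /orP [/eqP -> //|hr]; apply: hc; rewrite inE hr orbT.
- by rewrite /= e.
- by rewrite /has_incr /= e.
Qed.

Lemma reduced_cons_Mn m d R : reduced m R -> head 0%N (map fst R) != 0%N -> in_Mn d ->
  reduced m ((0%N, d - psi d *: 1) :: R).
Proof.
case=> hw hc ha hX hh hd; have [hi hz] := centered_Mn_letter m hd; split=> //.
- by move=> r; rewrite inE => /orP [/eqP -> //|/hw].
- by move=> r; rewrite inE => /orP [/eqP -> //|/hc].
- by case: R hw hc ha hX hh => [|r R] //= _ _ ha _ hh; rewrite /alt_labels /= eq_sym hh.
Qed.

Lemma reduced_rconsl m p R : reduced m (rcons R p) -> p.1 = 0%N -> reduced m R.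
Proof.
case=> hw hc ha hX hp; split.
- by move=> q hq; apply: hw; rewrite mem_rcons inE hq orbT.
- by move=> q hq; apply: hc; rewrite mem_rcons inE hq orbT.
- by move: ha; rewrite map_rcons => /alt_labels_rconsl.
- by move: hX; rewrite /has_incr map_rcons -cats1 has_cat /= hp /= !orbF.
Qed.

Lemma reduced_set_last m q p R : reduced m (rcons R p) -> letter_at m q -> psi q.2 = 0 ->
  q.1 = p.1 -> reduced m (rcons R q).
Proof.
case=> hw hc ha hX hq hq0 e; split.
- move=> r; rewrite mem_rcons inE => /orP [/eqP -> //|hr].
  by apply: hw; rewrite mem_rcons inE hr orbT.
- move=> r; rewrite mem_rcons inE => /orP [/eqP -> //|hr].
  by apply: hc; rewrite mem_rcons inE hr orbT.
- by rewrite map_rcons e -map_rcons.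
- by rewrite /has_incr map_rcons e -map_rcons.
Qed.

Lemma reduced_rcons_Mn m d R : reduced m R -> last 0%N (map fst R) != 0%N -> in_Mn d ->
  reduced m (rcons R (0%N, d - psi d *: 1)).
Proof.
case=> hw hc ha hX hh hd; have [hi hz] := centered_Mn_letter m hd; split.
- by move=> r; rewrite mem_rcons inE => /orP [/eqP -> //|/hw].
- by move=> r; rewrite mem_rcons inE => /orP [/eqP -> //|/hc].
- by rewrite map_rcons; apply: alt_labels_rcons => //; right.
- by move: hX; rewrite /has_incr map_rcons -cats1 has_cat => ->.
Qed.

(* Multiplying a reduced word by an element of M_n(C) either merges it into
   the boundary M_n(C)-letter or adds a new one; recentering the new letter
   leaves a reduced word plus a multiple of a reduced word. *)
Lemma Mn_mul_reduced m d R : in_Mn d -> reduced m R -> reduced_span m (d * lprod R).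
Proof.
move=> hd; case: R => [[_ _ _ //]|p R] hR; rewrite lprod_cons.
have [hp0|hp0] := eqVneq p.1 0%N.
  have he : in_Mn (d * p.2).
    apply: in_MnM => //; have [hw _ _ _] := hR.
    by have [h _] := hw p (mem_head _ _); move: h; rewrite /letter_ok hp0.
  have [hi hz] := centered_Mn_letter m he.
  have -> : d * (p.2 * lprod R) =
      lprod ((0%N, d * p.2 - psi (d * p.2) *: 1) :: R) + psi (d * p.2) *: lprod R.
    by rewrite lprod_cons /= mulrBl -scalerAl mul1r subrK mulrA.
  apply/rspanD/rspanZ/rspan_lprod; last exact: reduced_behead hR hp0.
  by apply/rspan_lprod/(reduced_set_head hR).
have -> : d * (p.2 * lprod R) =
    lprod ((0%N, d - psi d *: 1) :: p :: R) + psi d *: lprod (p :: R).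
  by rewrite !lprod_cons /= mulrBl -scalerAl mul1r subrK mulrA.
by apply/rspanD/rspanZ/rspan_lprod => //; apply/rspan_lprod/reduced_cons_Mn.
Qed.

Lemma reduced_mul_Mn m d R : in_Mn d -> reduced m R -> reduced_span m (lprod R * d).
Proof.
move=> hd; case/lastP: R => [[_ _ _ //]|R p] hR; rewrite lprod_rcons.
have [hp0|hp0] := eqVneq p.1 0%N.
  have he : in_Mn (p.2 * d).
    apply: in_MnM => //; have [hw _ _ _] := hR.
    have [h _] := hw p (mem_rcons_last R p).
    by move: h; rewrite /letter_ok hp0.
  have [hi hz] := centered_Mn_letter m he.
  have -> : lprod R * p.2 * d =
      lprod (rcons R (0%N, p.2 * d - psi (p.2 * d) *: 1)) + psi (p.2 * d) *: lprod R.
    by rewrite lprod_rcons /= mulrBr mulrZ mulr1 subrK mulrA.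
  apply/rspanD/rspanZ/rspan_lprod; last exact: reduced_rconsl hR hp0.
  by apply/rspan_lprod/(reduced_set_last hR).
have -> : lprod R * p.2 * d =
    lprod (rcons (rcons R p) (0%N, d - psi d *: 1)) + psi d *: lprod (rcons R p).
  by rewrite !lprod_rcons /= mulrBr mulrZ mulr1 subrK.
apply/rspanD/rspanZ/rspan_lprod => //; apply/rspan_lprod/reduced_rcons_Mn => //.
by rewrite map_rcons last_rcons.
Qed.

Lemma rspan_Mn_mull m d x : in_Mn d -> reduced_span m x -> reduced_span m (d * x).
Proof.
move=> hd; elim=> [R /(Mn_mul_reduced hd) //|||a y _ hy].
- by rewrite mulr0; exact: rspan0.
- by move=> y z _ hy _ hz; rewrite mulrDr; exact: rspanD.
- by rewrite mulrZ; exact: rspanZ.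
Qed.

Lemma rspan_Mn_mulr m d x : in_Mn d -> reduced_span m x -> reduced_span m (x * d).
Proof.
move=> hd; elim=> [R /(reduced_mul_Mn hd) //|||a y _ hy].
- by rewrite mul0r; exact: rspan0.
- by move=> y z _ hy _ hz; rewrite mulrDl; exact: rspanD.
- by rewrite -scalerAl; exact: rspanZ.
Qed.

Definition last_incr_label (P : seq (nat * B)) := last 0%N [seq k <- map fst P | k != 0%N].

Lemma last_incr_label_catr m P R : word_at m R -> has_incr R ->
  last_incr_label (P ++ R) = m.+1.
Proof.
move=> hw; rewrite /has_incr has_filter /last_incr_label map_cat filter_cat last_cat.
have : forall x, x \in [seq k <- map fst R | k != 0%N] -> x = m.+1.
  move=> x; rewrite mem_filter => /andP [hx /mapP [p hp e]]; subst x.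
  by case: (hw p hp) => _ [h|//]; rewrite h in hx.
case: [seq k <- _ | _] => [//|k s] hs _; apply: hs; exact: mem_last.
Qed.

Lemma last_incr_label_rcons0 P d : last_incr_label (rcons P (0%N, d)) = last_incr_label P.
Proof. by rewrite /last_incr_label map_rcons filter_rcons. Qed.

Lemma last_incr_label_last P :
  last 0%N (map fst P) != 0%N -> last_incr_label P = last 0%N (map fst P).
Proof.
case/lastP: P => [|Q q] //; rewrite map_rcons last_rcons => h.
by rewrite /last_incr_label map_rcons filter_rcons h last_rcons.
Qed.

Section ChainStep.
Variables (m : nat) (rest : B).
Hypothesis IH : forall P, P <> [::] -> centered_ok P -> alt_labels (map fst P) ->
  last_incr_label P = m.+1 -> psi (lprod P * rest) = 0.

Lemma psi_chain_concat P R : centered_ok P -> alt_labels (map fst (P ++ R)) -> reduced m R ->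
  psi (lprod (P ++ R) * rest) = 0.
Proof.
move=> hok hadj hR; have [hw _ _ hX] := hR.
apply: IH => //; last exact: last_incr_label_catr.
  by case: P R hX {hok hadj hw hR} => [|? ?] [|? ?].
exact: centered_ok_cat hok (reduced_centered_ok hR).
Qed.

(* The junction of two M_n(C)-letters: merge them and recenter. *)
Lemma psi_chain_merge P0 p r R1 :
  centered_ok (rcons P0 p) -> alt_labels (map fst (rcons P0 p)) ->
  last_incr_label (rcons P0 p) != m.+1 -> reduced m (r :: R1) -> p.1 = 0%N -> r.1 = 0%N ->
  psi (lprod (rcons P0 p ++ r :: R1) * rest) = 0.
Proof.
move=> hok hadj hl hR hp0 hr0; have [hw _ ha hX] := hR.
have [hpok _] := hok p (mem_rcons_last P0 p).
have [hrok _] := hw r (mem_head _ _).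
have he : in_Mn (p.2 * r.2).
  by apply: in_MnM; [move: hpok | move: hrok]; rewrite /letter_ok ?hp0 ?hr0.
set c := psi (p.2 * r.2); have [hi hz] := centered_Mn_letter m he.
have hR1 : reduced m R1 := reduced_behead hR hr0.
have [hw1 _ ha1 hX1] := hR1.
have hP0 : centered_ok P0 by apply: centered_ok_sub hok _ => q hq; rewrite mem_rcons inE hq orbT.
have haP0 : alt_labels (map fst P0) by move: hadj; rewrite map_rcons => /alt_labels_rconsl.
have hlP0 : P0 = [::] \/ last 0%N (map fst P0) != 0%N.
  case: P0 hadj {hok hl hP0 haP0} => [|q P0] hadj; [by left | right].
  by move: hadj; rewrite map_rcons hp0 => /alt_labels_rcons_last [].
have -> : lprod (rcons P0 p ++ r :: R1) = lprod (P0 ++ (0%N, p.2 * r.2) :: R1).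
  by rewrite cat_rcons !lprod_cat !lprod_cons /= !mulrA.
rewrite (lprod_recenter P0 (0%N, p.2 * r.2) R1 c) /= -/c.
rewrite mulrDl -scalerAl (stateD hpsi) (stateZ hpsi) [psi (lprod (P0 ++ R1) * _)]IH ?mulr0 ?addr0.
- apply: psi_chain_concat => //; last exact: reduced_set_head hR hi hz (esym hr0).
  rewrite map_cat; apply: alt_labels_cat => //; first by move: ha; rewrite /= hr0.
  by case: hlP0 => [->|h]; [left|right; right].
- have hR1ne : R1 <> [::] by move=> h0; rewrite h0 in hX1.
  by case: (P0).
- exact: centered_ok_cat (reduced_centered_ok hR1).
- rewrite map_cat; apply: alt_labels_cat => //.
  case: hlP0 => [->|h]; [by left | right; right].
  have -> : head 0%N (map fst R1) = m.+1.
    case eR1 : R1 hX1 hw1 ha => [//|q R2] _ hw1; rewrite /alt_labels /= hr0 => /andP [hq0 _].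
    by case: (hw1 q (mem_head _ _)) => _ [e0|//]; rewrite e0 in hq0.
  by rewrite -(last_incr_label_last h) -(last_incr_label_rcons0 P0 p.2) -hp0 -surjective_pairing.
- exact: last_incr_label_catr.
Qed.

Lemma psi_chain_step P R : centered_ok P -> alt_labels (map fst P) ->
  last_incr_label P != m.+1 -> reduced m R -> psi (lprod P * (lprod R * rest)) = 0.
Proof.
move=> hok hP hl hR; have [hw _ ha _] := hR; rewrite mulrA -lprod_cat.
case/lastP: P hok hP hl => [|P0 p] hok hP hl; first exact: psi_chain_concat.
case: R hR hw ha => [[_ _ _ //]|r R1] hR hw ha.
have junction : last 0%N (map fst (rcons P0 p)) != r.1 ->
    psi (lprod (rcons P0 p ++ r :: R1) * rest) = 0.
  move=> hpr; apply: psi_chain_concat => //; rewrite map_cat.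
  by apply: alt_labels_cat => //; right; right.
rewrite map_rcons last_rcons in junction.
have [hp0|hp0] := eqVneq p.1 0%N.
  have [hr0|hr0] := eqVneq r.1 0%N; first exact: psi_chain_merge.
  by apply: junction; rewrite hp0 eq_sym.
have hlast : last_incr_label (rcons P0 p) = p.1.
  by rewrite (last_incr_label_last (P := rcons P0 p)) map_rcons last_rcons.
by apply: junction; case: (hw r (mem_head _ _)) => _ [->|->] //; rewrite -hlast.
Qed.

End ChainStep.

Lemma psi_chain ys : (forall q, q \in ys -> reduced_span q.1 q.2) -> alt_labels (map fst ys) ->
  forall P, (P <> [::] \/ ys <> [::]) -> centered_ok P -> alt_labels (map fst P) ->
  (ys = [::] \/ last_incr_label P != (head 0%N (map fst ys)).+1) ->
  psi (lprod P * \prod_(q <- ys) q.2) = 0.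
Proof.
elim: ys => [|[m x] ys IH] hsp hadj P hne hok hP hl.
  by rewrite big_nil mulr1; apply: psi_lprod_centered => //; case: hne.
rewrite big_cons /=; case: hl => [//|/= hl].
have : reduced_span m x := hsp _ (mem_head _ _).
elim=> [R hR|||a y _ hy].
- apply: (psi_chain_step _ hok hP hl hR) => P' hP' hok' hadj' hl'.
  apply: IH => //; first by move=> q hq; apply: hsp; rewrite inE hq orbT.
  - exact: alt_labels_cons hadj.
  - by left.
  - move: hadj; case: (ys) => [|[m' x'] ys'] /= hadj; [by left | right].
    by rewrite hl' eqSS; move: hadj; rewrite /alt_labels /= => /andP [].
- by rewrite mul0r mulr0 (state0 hpsi).
- by move=> y z _ hy _ hz; rewrite mulrDl mulrDr (stateD hpsi) hy hz addr0.
- by rewrite -scalerAl mulrZ (stateZ hpsi) hy mulr0.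
Qed.

Definition label_letter m (it : letter) : nat * B :=
  match it with
  | inl d => (0%N, sval d)
  | inr w => (m.+1, star_word starB (iA (nth 0 xs m)) w)
  end.

Lemma eval_word_lprod m L : eval_word (iA (nth 0 xs m)) L = lprod (map (label_letter m) L).
Proof. by rewrite /eval_word /lprod big_map; apply: eq_bigr => -[]. Qed.

Lemma word_at_label m L : (m < size xs)%N -> word_at m (map (label_letter m) L).
Proof.
move=> hm p /mem_map_exists [[d|w] ->] /=; first by split; [exact: svalP | left].
split; [split=> //; exists (star_word starA (nth 0 xs m) w) | by right].
by rewrite iA_star_word; split=> //; exact: salg_star_word.
Qed.

(* The M_n(C)-part of a corner element is a multiple of E_11, detected by psi. *)
Lemma centered_corner_rspan m b : (m < size xs)%N ->
  psi (nceval (E e1 e1) starB (jgen (iA (nth 0 xs m))) b) = 0 ->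
  reduced_span m (nceval (E e1 e1) starB (jgen (iA (nth 0 xs m))) b).
Proof.
move=> hm; set x := nceval _ _ _ b => hx0.
have [d [y [hd hy hxy]]] : Mn_plus_rspan m x.
  rewrite /x nceval_jgen_words; apply: Mn_plus_rspan_sum => p; apply: Mn_plus_rspanZ.
  by rewrite eval_word_lprod; apply: lprod_Mn_plus_rspan; exact: word_at_label.
have [c hc] := hd e1 e1.
have hcorner : reduced_span m (E e1 e1 * y * E e1 e1).
  by apply/rspan_Mn_mulr/rspan_Mn_mull; rewrite ?hy //; exact: in_Mn_E.
have hx : x = c *: E e1 e1 + E e1 e1 * y * E e1 e1.
  by rewrite -[LHS]nceval_jgen_corner -/x hxy mulrDr mulrDl hc.
have c0 : c = 0.
  move/eqP: hx0; rewrite hx (stateD hpsi) (rspan_psi hcorner) addr0 (stateZ hpsi) hEtr eqxx.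
  by rewrite mulf_eq0 => /orP [/eqP //|]; rewrite mulf_eq0 invr_eq0 (negPf natn_neq0) pnatr_eq0.
by rewrite hx c0 scale0r add0r.
Qed.

Lemma free_family_jgen : free_family (fun x => n%:R * psi x)
  [seq hom_image (E e1 e1) starB (jgen (iA x)) | x <- xs].
Proof.
move=> s hs hin hpath; apply/eqP; rewrite mulf_eq0 (negPf natn_neq0) /=; apply/eqP.
have hsp : forall q, q \in s -> reduced_span q.1 q.2.
  move=> q hq; have [hq1 hq2 /eqP] := hin q hq; rewrite size_map in hq1.
  rewrite mulf_eq0 (negPf natn_neq0) /= => /eqP; move: hq2.
  by rewrite (nth_map 0) // => -[b ->]; exact: centered_corner_rspan.
have := @psi_chain s hsp _ [::]; rewrite /lprod big_nil mul1r; apply=> //.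
- by case: s hs hpath {hin hsp} => [|h t] //= _; rewrite -alt_labels_path.
- by right; case: s hs {hin hsp hpath}.
- by right.
Qed.

End Increments.

Lemma psi_nceval_same_dist (a1 a2 : A) :
  (forall w, phi (star_word starA a1 w) = phi (star_word starA a2 w)) ->
  forall b, psi (nceval (E e1 e1) starB (jgen (iA a1)) b)
          = psi (nceval (E e1 e1) starB (jgen (iA a2)) b).
Proof.
move=> h b; pose x (c : bool) := if c then a1 else a2.
by apply: (moment_poly_same_dist _ (moment_poly_nceval x b) true false) => w [] [].
Qed.

Section LevyProcess.
Variable U : R -> A.
Hypothesis hU : free_unitary_levy starA phi U.

Lemma free_levy_jgen :
  free_levy_Un starB (E e1 e1) (fun x => n%:R * psi x) (fun t => jgen (iA (U t))).
Proof.
have [hunit hU0 hdist hfreeU hcont] := hU.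
have conv_incr s t : conv_gen (antipode_gen starB (jgen (iA (U s)))) (jgen (iA (U t)))
                     = jgen (iA (starA (U s) * U t)).
  apply: functional_extensionality => i; apply: functional_extensionality => k.
  by rewrite conv_antipode_jgen hiAM hiAS.
split.
- move=> t ht; have [hUU' hU'U] := hunit t ht.
  by apply: unc_hom_jgen; rewrite -hiAS -hiAM ?hUU' ?hU'U hiA1.
- by move=> i k; rewrite hU0 hiA1 jgen1.
- move=> s t hs hst b; rewrite conv_incr; congr (_ * _).
  apply: psi_nceval_same_dist => w.
  by rewrite (hdist s t R0 (Rminus t s)) ?hU0 ?(star1 hstarA) ?mul1r //; lra.
- move=> ts hts.
  rewrite (@increments_map _ _ U (fun s t => starA (U s) * U t) (fun x => jgen (iA x))) //.
  by rewrite -map_comp; exact: free_family_jgen (hfreeU ts hts).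
- move=> b.
  have hmoments w : tends0 (fun s => phi (star_word starA (U s) w)) (phi (star_word starA (U R0) w)).
    by rewrite hU0 (star_word1 hstarA) (state1 hphi); exact: hcont.
  have := tends0M (tends0_cst n%:R) (moment_poly_tends0 hmoments (moment_poly_nceval U b)).
  by rewrite hU0 hiA1 psi_jgen1.
Qed.

End LevyProcess.
End FreeProduct.
End CornerAlgebra.

Theorem mainTheorem13
  (C : numClosedFieldType)
  (A : lalgType C) (starA : A -> A) (phi : A -> C)
  (hstarA : is_star starA) (hphi : is_state phi)
  (U : R -> A) (hU : free_unitary_levy starA phi U)
  (n : nat) (hn : (0 < n)%N)
  (B : lalgType C) (starB : B -> B) (psi : B -> C)
  (hstarB : is_star starB) (hpsi : is_state psi)
  (iA : A -> B)
  (hiA1 : iA 1 = 1)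
  (hiAM : forall x y, iA (x * y) = iA x * iA y)
  (hiAL : forall (a : C) x y, iA (a *: x + y) = a *: iA x + iA y)
  (hiAS : forall x, iA (starA x) = starB (iA x))
  (hiAphi : forall x, psi (iA x) = phi x)
  (E : 'I_n -> 'I_n -> B)
  (hEM : forall i j k l, E i j * E k l = (j == k)%:R *: E i l)
  (hE1 : \sum_i E i i = 1)
  (hES : forall i j, starB (E i j) = E j i)
  (hEtr : forall i j, psi (E i j) = (i == j)%:R / n%:R)
  (hfree : free_family psi
     [:: salg 1 starB (fun x => exists a, x = iA a);
         salg 1 starB (fun x => exists i j, x = E i j)]) :
  let e1 := Ordinal hn in
  free_levy_Un starB (E e1 e1) (fun x => n%:R * psi x)
    (fun t i j => E e1 i * iA (U t) * E j e1).
Proof.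
exact: (free_levy_jgen hstarB hn hEM hE1 hES hstarA hphi hpsi hiA1 hiAM hiAL hiAS hiAphi
  hEtr hfree hU).
Qed.
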